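(* Assume $\sigma_1(x)=\tfrac12\sigma_1''(0)\,x(x-a_1)$ with $\sigma_1''(0)\ne0$ and real $a_1>0$, and $\frac{\tau'(0)}{\frac12\sigma_1''(0)}=-\frac{1}{1-q^{-1}}$, so that $\sigma_2(x)=\sigma_2'(0)x$ with $\sigma_2'(0)=q\big[(1-q^{-1})\tau(0)-\tfrac12\sigma_1''(0)a_1\big]\ne0$. Let $y_0=q^{-1}\Big[1-\frac{(1-q^{-1})}{a_1}\frac{\tau(0)}{\frac12\sigma_1''(0)}\Big]$ and assume $0<qy_0<1$. Put $b=a_1$ and $$\rho(x)=|x|^{\alpha}(qx/b;q)_\infty,\qquad q^{\alpha}=-\frac{q^{-2}\sigma_2'(0)}{\tfrac12\sigma_1''(0)b}.$$ Then there exist polynomials $P_n$, $n\in\mathbb{N}_0$, with $P_n$ of degree $n$ a solution of the q-EHT with $\lambda=\lambda_n$, and nonzero constants $d_n^2$, such that for all $m,n\in\mathbb{N}_0$ $$\int_0^{b}P_n(x)P_m(x)\rho(x)\,d_qx=d_n^2\delta_{mn},$$ i.e. orthogonality with respect to $\rho$ supported on $\{q^kb\}_{k\in\mathbb{N}_0}$.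
   Context: Throughout $0<q<1$. For a function $y$ and $\zeta\in\{q,q^{-1}\}$, $D_\zeta y(x)=\frac{y(x)-y(\zeta x)}{(1-\zeta)x}$ for $x\ne0$ and $D_\zeta y(0)=y'(0)$; $[n]_q=\frac{1-q^n}{1-q}$. Let $\sigma_1$ be a real polynomial of degree at most two, $\tau(x)=\tau'(0)x+\tau(0)$ a real polynomial with $\tau'(0)\ne0$, and $\sigma_2(x):=q[\sigma_1(x)+(1-q^{-1})x\tau(x)]$. The q-EHT with parameter $n$ is $\sigma_1(x)D_{q^{-1}}D_qy(x)+\tau(x)D_qy(x)+\lambda_ny(x)=0$, $\lambda_n=-[n]_q\big(\tau'(0)+\tfrac12[n-1]_{q^{-1}}\sigma_1''(0)\big)$. $(\beta;q)_\infty=\prod_{k\ge0}(1-\beta q^k)$. For $q^\alpha=c$ ($c\ne0$), $\alpha$ is any complex number with $e^{\alpha\ln q}=c$ and $|x|^\alpha:=e^{\alpha\ln|x|}$. For $b>0$, $\int_0^b f(x)\,d_qx=(1-q)b\sum_{j\ge0}q^jf(q^jb)$. *)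

From Stdlib Require Import Reals Lra.
From Coquelicot Require Import Coquelicot.
Open Scope R_scope.

Definition Dq (zeta : R) (y : R -> R) (x : R) : R :=
  if Req_EM_T x 0 then Derive y 0 else (y x - y (zeta * x)) / ((1 - zeta) * x).

Definition qnum (q : R) (k : Z) : R := (1 - powerRZ q k) / (1 - q).

(* eigenvalue lambda_n of the q-EHT; s2 = sigma_1''(0), t1 = tau'(0). *)
Definition lambda_n (q s2 t1 : R) (n : nat) : R :=
  - qnum q (Z.of_nat n) * (t1 + / 2 * qnum (/ q) (Z.of_nat n - 1) * s2).

Definition qEHT (q : R) (sigma1 tau : R -> R) (lam : R) (y : R -> R) : Prop :=
  forall x : R, sigma1 x * Dq (/ q) (Dq q y) x + tau x * Dq q y x + lam * y x = 0.

Definition is_poly_deg (y : R -> R) (n : nat) : Prop :=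
  exists a : nat -> R, a n <> 0 /\ forall x, y x = sum_f_R0 (fun k => a k * x ^ k) n.

Fixpoint qpoch_part (beta q : R) (n : nat) : R :=
  match n with
  | O => 1
  | S m => qpoch_part beta q m * (1 - beta * q ^ m)
  end.
Definition qpoch_inf (beta q : R) : R := real (Lim_seq (qpoch_part beta q)).

Definition cexp (z : C) : C := (exp (fst z) * cos (snd z), exp (fst z) * sin (snd z)).

Definition cpow_abs (x : R) (alpha : C) : C := cexp (alpha * RtoC (ln (Rabs x)))%C.

(* Jackson q-integral: int_0^b f(x) d_q x = (1-q) b sum_{j>=0} q^j f(q^j b) ;
   qint_is q b f l  means the series converges and the integral equals l. *)
Definition qint_is (q b : R) (f : R -> C) (l : C) : Prop :=
  exists s : C, is_series (fun j : nat => (RtoC (q ^ j) * f ((q ^ j * b)%R))%C) s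
                /\ l = (RtoC ((1 - q) * b) * s)%C.

From Stdlib Require Import Reals Lra Lia.
From Coquelicot Require Import Coquelicot.
Open Scope R_scope.

(* Under the assumption tying tau'(0) to sigma_1''(0), the eigenvalues are
   lambda_n = (sigma_1''(0)/2) (q/(1-q))^2 (1 - q^-n), pairwise distinct, and the
   q-EHT operator maps x^k to -lambda_k x^k + mu_k x^(k-1); back-substitution from
   the leading coefficient 1 yields a polynomial eigenfunction P_n of each degree n.
   On the nodes x_j = q^j b, multiplying the equation by w_j = r^j (q^(j+1); q)_oo,
   where r = q y0 makes w_(j+1) (1 - q^(j+1)) = r w_j, puts it in the discrete
   self-adjoint form lambda w_j P(x_j) = c (w_(j-1) D_q P(x_(j-1)) - w_j D_q P(x_j)).
   Summation by parts then bounds (lambda_n - lambda_m) sum_(j<=N) w_j P_n P_m (x_j)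
   by O(r^N), which gives orthogonality.  The norms are positive because w_j > 0 and
   a nonzero polynomial cannot vanish on all of {q^j b}.  Finally
   q^j rho(q^j b) = |b|^alpha w_j because q^alpha = r/q. *)

(** * Polynomials and q-derivatives *)

Definition poly_eval (c : nat -> R) (n : nat) (x : R) : R :=
  sum_f_R0 (fun k => c k * x ^ k) n.

Lemma poly_eval_succ_horner c n x :
  poly_eval c (S n) x = c 0%nat + x * poly_eval (fun k => c (S k)) n x.
Proof.
  unfold poly_eval; rewrite decomp_sum by lia; simpl pred.
  rewrite scal_sum; simpl; rewrite Rmult_1_r; f_equal; apply sum_eq; intros k _; ring.
Qed.

Lemma poly_eval_0 c n : poly_eval c n 0 = c 0%nat.
Proof.
  destruct n as [|n]; [unfold poly_eval; simpl; ring|].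
  rewrite poly_eval_succ_horner; ring.
Qed.

Lemma poly_eval_abs_le c n x B :
  Rabs x <= B -> Rabs (poly_eval c n x) <= poly_eval (fun k => Rabs (c k)) n B.
Proof.
  intro HxB; unfold poly_eval.
  eapply Rle_trans; [apply Rsum_abs|].
  apply sum_Rle; intros k _.
  rewrite Rabs_mult, <- RPow_abs.
  apply Rmult_le_compat_l; [apply Rabs_pos|].
  apply pow_incr; split; [apply Rabs_pos | exact HxB].
Qed.

Lemma ex_derive_poly_eval c n x : ex_derive (poly_eval c n) x.
Proof.
  revert c; induction n as [|n IH]; intro c.
  - apply (ex_derive_ext (fun _ => c 0%nat)); [intro t; unfold poly_eval; simpl; ring|].
    apply ex_derive_const.
  - apply (ex_derive_ext (fun t => c 0%nat + t * poly_eval (fun k => c (S k)) n t)).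
    + intro t; symmetry; apply poly_eval_succ_horner.
    + auto_derive; auto.
Qed.

Lemma Derive_poly_eval_0 c n : Derive (poly_eval c (S n)) 0 = c 1%nat.
Proof.
  rewrite (Derive_ext _ (fun t => c 0%nat + t * poly_eval (fun k => c (S k)) n t))
    by (intro t; apply poly_eval_succ_horner).
  rewrite Derive_plus, Derive_const, Derive_mult, Derive_id, poly_eval_0
    by auto using ex_derive_const, ex_derive_id, ex_derive_poly_eval, ex_derive_mult.
  ring.
Qed.

Lemma Dq_nonzero z y x : x <> 0 -> Dq z y x = (y x - y (z * x)) / ((1 - z) * x).
Proof. intro Hx; unfold Dq; destruct (Req_EM_T x 0); [contradiction | reflexivity]. Qed.

Lemma Dq_0 z y : Dq z y 0 = Derive y 0.
Proof. unfold Dq; destruct (Req_EM_T 0 0); [reflexivity | contradiction]. Qed.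

Lemma Dq_poly_eval_succ z c n x : z <> 1 -> x <> 0 ->
  Dq z (poly_eval c (S n)) x = poly_eval (fun k => c (S k) * ((1 - z ^ S k) / (1 - z))) n x.
Proof.
  intros Hz Hx; rewrite Dq_nonzero by exact Hx.
  assert (Hz' : 1 - z <> 0) by lra.
  induction n as [|n IH].
  - unfold poly_eval; simpl; field; auto.
  - unfold poly_eval in *.
    rewrite !(tech5 _ (S n)), (tech5 (fun k => c (S k) * _ * x ^ k) n), <- IH, Rpow_mult_distr.
    set (A := sum_f_R0 _ (S n)); set (B := sum_f_R0 _ (S n)); simpl pow; field; auto.
Qed.

(** * Polynomial eigenfunctions of the q-EHT *)

Lemma sum_f_R0_telescope (t nu : nat -> R) n :
  (forall k, (k < n)%nat -> t k = nu k - nu (S k)) -> sum_f_R0 t n = nu 0%nat - nu n + t n.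
Proof.
  induction n as [|n IH]; intro Ht; simpl; [ring|].
  rewrite IH by (intros k Hk; apply Ht; lia).
  rewrite (Ht n) by lia; ring.
Qed.

Section TriangularEigenproblem.

Variables lam mu : nat -> R.

(* Coefficient of [x^(n-d)], computed downward from the leading one. *)
Fixpoint eigen_coef_rev (n d : nat) : R :=
  match d with
  | O => 1
  | S d' => - mu (n - d') * eigen_coef_rev n d' / (lam n - lam (n - S d'))
  end.

Definition eigen_coef (n k : nat) : R := eigen_coef_rev n (n - k).

Lemma eigen_coef_top n : eigen_coef n n = 1.
Proof. unfold eigen_coef; rewrite Nat.sub_diag; reflexivity. Qed.

Lemma eigen_coef_step n k : (k < n)%nat -> lam n <> lam k ->
  (lam n - lam k) * eigen_coef n k + mu (S k) * eigen_coef n (S k) = 0.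
Proof.
  intros Hk Hl; unfold eigen_coef.
  replace (n - k)%nat with (S (n - S k)) by lia; simpl eigen_coef_rev.
  replace (n - (n - S k))%nat with (S k) by lia.
  replace (n - S (n - S k))%nat with k by lia.
  field; intro E; apply Hl; lra.
Qed.

Lemma eigen_coef_telescope n x : mu 0%nat = 0 ->
  (forall k, (k < n)%nat -> lam n <> lam k) ->
  sum_f_R0 (fun k => eigen_coef n k * ((lam n - lam k) * x ^ k + mu k * x ^ pred k)) n = 0.
Proof.
  intros Hmu0 Hl.
  rewrite (sum_f_R0_telescope _ (fun k => eigen_coef n k * mu k * x ^ pred k)).
  - rewrite Hmu0; ring.
  - intros k Hk.
    pose proof (eigen_coef_step n k Hk (Hl k Hk)) as E.
    replace (eigen_coef n k * ((lam n - lam k) * x ^ k + mu k * x ^ pred k))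
      with (((lam n - lam k) * eigen_coef n k + mu (S k) * eigen_coef n (S k)) * x ^ k
            + eigen_coef n k * mu k * x ^ pred k - eigen_coef n (S k) * mu (S k) * x ^ k)
      by ring.
    rewrite E; simpl pred; ring.
Qed.

End TriangularEigenproblem.

Definition qEHT_lhs (q : R) (sigma1 tau : R -> R) (lam : R) (y : R -> R) (x : R) : R :=
  sigma1 x * Dq (/ q) (Dq q y) x + tau x * Dq q y x + lam * y x.

Lemma qEHT_lhs_nonzero q sigma1 tau lam y x : q <> 0 -> x <> 0 ->
  qEHT_lhs q sigma1 tau lam y x =
  sigma1 x * (((y x - y (q * x)) / ((1 - q) * x)
               - (y (/ q * x) - y x) / ((1 - q) * (/ q * x))) / ((1 - / q) * x))
  + tau x * ((y x - y (q * x)) / ((1 - q) * x)) + lam * y x.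
Proof.
  intros Hq Hx; unfold qEHT_lhs.
  assert (Hx' : / q * x <> 0) by (apply Rmult_integral_contrapositive; auto with real).
  rewrite !Dq_nonzero by assumption.
  replace (q * (/ q * x)) with x by (field; exact Hq); reflexivity.
Qed.

Lemma qEHT_lhs_linear q sigma1 tau lam y1 y2 a x : q <> 0 -> x <> 0 ->
  qEHT_lhs q sigma1 tau lam (fun t => y1 t + a * y2 t) x
  = qEHT_lhs q sigma1 tau lam y1 x + a * qEHT_lhs q sigma1 tau lam y2 x.
Proof. intros Hq Hx; rewrite !qEHT_lhs_nonzero by assumption; unfold Rdiv; ring. Qed.

Lemma qEHT_lhs_poly_eval q sigma1 tau lam c n x : q <> 0 -> x <> 0 ->
  qEHT_lhs q sigma1 tau lam (poly_eval c n) x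
  = sum_f_R0 (fun k => c k * qEHT_lhs q sigma1 tau lam (fun t => t ^ k) x) n.
Proof.
  intros Hq Hx; induction n as [|n IH].
  - simpl sum_f_R0; rewrite !qEHT_lhs_nonzero by assumption.
    unfold poly_eval; simpl; unfold Rdiv; ring.
  - simpl sum_f_R0; rewrite <- IH, <- qEHT_lhs_linear by assumption; reflexivity.
Qed.

Definition qEHT_mu (q s2 a1 t0 : R) (k : nat) : R :=
  qnum q (Z.of_nat k) * (t0 - / 2 * s2 * a1 * qnum (/ q) (Z.of_nat k - 1)).

Lemma qnum_nat q k : qnum q (Z.of_nat k) = (1 - q ^ k) / (1 - q).
Proof. unfold qnum; rewrite <- pow_powerRZ; reflexivity. Qed.

Lemma qnum_pred q k : qnum q (Z.of_nat (S k) - 1) = (1 - q ^ k) / (1 - q).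
Proof. replace (Z.of_nat (S k) - 1)%Z with (Z.of_nat k) by lia; apply qnum_nat. Qed.

Lemma lambda_n_0 q s2 t1 : lambda_n q s2 t1 0 = 0.
Proof. unfold lambda_n; rewrite qnum_nat; simpl; unfold Rdiv; ring. Qed.

Lemma qEHT_mu_0 q s2 a1 t0 : qEHT_mu q s2 a1 t0 0 = 0.
Proof. unfold qEHT_mu; rewrite qnum_nat; simpl; unfold Rdiv; ring. Qed.

Lemma qEHT_mu_1 q s2 a1 t0 : 0 < q < 1 -> qEHT_mu q s2 a1 t0 1 = t0.
Proof.
  intro Hq; unfold qEHT_mu; rewrite qnum_pred, qnum_nat; simpl.
  field; repeat split; lra.
Qed.

Lemma inv_neq_1 q : q <> 0 -> q <> 1 -> 1 - / q <> 0.
Proof.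
  intros H0 H1 E; apply H1.
  rewrite <- (Rinv_inv q); replace (/ q) with 1 by lra; apply Rinv_1.
Qed.

Section qEHTPolynomials.

Variables q s2 a1 t1 t0 : R.
Hypothesis q_range : 0 < q < 1.

Let sigma1 (x : R) : R := / 2 * s2 * x * (x - a1).
Let tau (x : R) : R := t1 * x + t0.

Lemma qEHT_lhs_monomial lam k x : x <> 0 ->
  qEHT_lhs q sigma1 tau lam (fun t => t ^ k) x
  = (lam - lambda_n q s2 t1 k) * x ^ k + qEHT_mu q s2 a1 t0 k * x ^ pred k.
Proof.
  intro Hx; rewrite qEHT_lhs_nonzero by lra; unfold sigma1, tau.
  assert (1 - / q <> 0) by (apply inv_neq_1; lra).
  destruct k as [|k].
  - rewrite lambda_n_0, qEHT_mu_0; simpl; field; repeat split; auto; lra.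
  - unfold lambda_n, qEHT_mu; rewrite qnum_pred, qnum_nat.
    rewrite !Rpow_mult_distr, pow_inv; simpl pred; simpl pow; rewrite pow_inv.
    assert (q ^ k <> 0) by (apply pow_nonzero; lra).
    field; repeat split; auto; lra.
Qed.

Definition qEHT_poly (n : nat) : R -> R :=
  poly_eval (eigen_coef (lambda_n q s2 t1) (qEHT_mu q s2 a1 t0) n) n.

Lemma qEHT_poly_deg n : is_poly_deg (qEHT_poly n) n.
Proof.
  exists (eigen_coef (lambda_n q s2 t1) (qEHT_mu q s2 a1 t0) n); split.
  - rewrite eigen_coef_top; lra.
  - reflexivity.
Qed.

Lemma qEHT_poly_solves n :
  (forall k, (k < n)%nat -> lambda_n q s2 t1 n <> lambda_n q s2 t1 k) ->
  qEHT q sigma1 tau (lambda_n q s2 t1 n) (qEHT_poly n).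
Proof.
  intros Hsimple x; fold (qEHT_lhs q sigma1 tau (lambda_n q s2 t1 n) (qEHT_poly n) x).
  set (c := eigen_coef (lambda_n q s2 t1) (qEHT_mu q s2 a1 t0) n).
  destruct (Req_EM_T x 0) as [->|Hx].
  - unfold qEHT_lhs, qEHT_poly; rewrite !Dq_0; unfold sigma1, tau; fold c.
    destruct n as [|n].
    + rewrite lambda_n_0, (Derive_ext (poly_eval c 0) (fun _ => c 0%nat))
        by (intro; unfold poly_eval; simpl; ring).
      rewrite Derive_const; ring.
    + rewrite Derive_poly_eval_0, poly_eval_0.
      pose proof (eigen_coef_step (lambda_n q s2 t1) (qEHT_mu q s2 a1 t0) (S n) 0
                    ltac:(lia) (Hsimple 0%nat ltac:(lia))) as E.
      rewrite lambda_n_0, qEHT_mu_1 in E by lra; fold c in E.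
      transitivity ((lambda_n q s2 t1 (S n) - 0) * c 0%nat + t0 * c 1%nat); [ring | exact E].
  - unfold qEHT_poly; rewrite qEHT_lhs_poly_eval by lra; fold c.
    rewrite <- (eigen_coef_telescope (lambda_n q s2 t1) (qEHT_mu q s2 a1 t0) n x)
      by (apply qEHT_mu_0 || exact Hsimple).
    apply sum_eq; intros k _; rewrite qEHT_lhs_monomial by exact Hx; reflexivity.
Qed.

End qEHTPolynomials.

Lemma lambda_n_closed_form q s2 t1 k : 0 < q < 1 -> t1 = / 2 * s2 * q / (1 - q) ->
  lambda_n q s2 t1 k = / 2 * s2 * q ^ 2 / (1 - q) ^ 2 * (1 - (/ q) ^ k).
Proof.
  intros Hq ->; destruct k as [|k].
  - rewrite lambda_n_0; simpl; ring.
  - unfold lambda_n; rewrite qnum_pred, qnum_nat, !pow_inv.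
    assert (q ^ k <> 0) by (apply pow_nonzero; lra).
    simpl pow; field; repeat split; auto; lra.
Qed.

Lemma lambda_n_neq q s2 t1 n k : 0 < q < 1 -> s2 <> 0 -> t1 = / 2 * s2 * q / (1 - q) ->
  n <> k -> lambda_n q s2 t1 n <> lambda_n q s2 t1 k.
Proof.
  intros Hq Hs Ht Hnk E; rewrite !(lambda_n_closed_form q s2 t1) in E by assumption.
  assert (Hc : / 2 * s2 * q ^ 2 / (1 - q) ^ 2 <> 0).
  { unfold Rdiv; repeat apply Rmult_integral_contrapositive_currified;
      try apply Rinv_neq_0_compat; try apply pow_nonzero; lra. }
  apply Rmult_eq_reg_l in E; [|exact Hc].
  assert (Hq' : 1 < / q) by (rewrite <- Rinv_1; apply Rinv_lt_contravar; lra).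
  destruct (Nat.lt_trichotomy n k) as [H|[H|H]]; [| exact (Hnk H) |];
    pose proof (Rlt_pow _ _ _ Hq' H); lra.
Qed.

(** * The q-Pochhammer symbol *)

Lemma qpoch_part_shift b q n : qpoch_part b q (S n) = (1 - b) * qpoch_part (b * q) q n.
Proof.
  induction n as [|n IH]; [simpl; ring|].
  change (qpoch_part b q (S (S n))) with (qpoch_part b q (S n) * (1 - b * q ^ S n)).
  rewrite IH; simpl; ring.
Qed.

Lemma pow_unit_interval q k : 0 <= q <= 1 -> 0 <= q ^ k <= 1.
Proof.
  intro Hq; split; [apply pow_le; lra|].
  rewrite <- (pow1 k); apply pow_incr; lra.
Qed.

Section qPochhammer.

Variables b q : R.
Hypotheses (q_range : 0 < q < 1) (b_range : 0 <= b <= 1).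

Let factor_range k : 0 <= b * q ^ k <= 1.
Proof. pose proof (pow_unit_interval q k ltac:(lra)); split; nra. Qed.

Lemma qpoch_part_decr n :
  0 <= qpoch_part b q n <= 1 /\ qpoch_part b q (S n) <= qpoch_part b q n.
Proof.
  induction n as [|n IH].
  - pose proof (factor_range 0); simpl in *; lra.
  - pose proof (factor_range n); pose proof (factor_range (S n)).
    change (qpoch_part b q (S (S n))) with (qpoch_part b q (S n) * (1 - b * q ^ S n)).
    assert (0 <= qpoch_part b q (S n) <= 1).
    { change (qpoch_part b q (S n)) with (qpoch_part b q n * (1 - b * q ^ n)).
      split; [apply Rmult_le_pos|]; nra. }
    split; [|nra]; lra.
Qed.

(* Weierstrass product inequality: prod (1 - b q^k) >= 1 - b sum q^k. *)
Lemma qpoch_part_lower n : 1 - b / (1 - q) <= qpoch_part b q n.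
Proof.
  assert (Hgeom : forall m, 1 - b * (1 - q ^ m) / (1 - q) <= qpoch_part b q m).
  { induction m as [|m IH]; [simpl; unfold Rdiv; lra|].
    change (qpoch_part b q (S m)) with (qpoch_part b q m * (1 - b * q ^ m)).
    destruct (qpoch_part_decr m) as [Hm _]; pose proof (factor_range m).
    replace (1 - b * (1 - q ^ S m) / (1 - q))
      with (1 - b * (1 - q ^ m) / (1 - q) - b * q ^ m) by (simpl; field; lra).
    nra. }
  eapply Rle_trans; [|apply Hgeom].
  pose proof (pow_unit_interval q n ltac:(lra)).
  apply Rplus_le_compat_l, Ropp_le_contravar; unfold Rdiv.
  apply Rmult_le_compat_r; [apply Rlt_le, Rinv_0_lt_compat; lra | nra].
Qed.

Lemma qpoch_part_cvg : is_lim_seq (qpoch_part b q) (qpoch_inf b q).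
Proof.
  assert (Hex : ex_finite_lim_seq (qpoch_part b q)).
  { apply (ex_finite_lim_seq_decr _ 0); intro n; apply qpoch_part_decr. }
  exact (Lim_seq_correct' _ Hex).
Qed.
Lemma qpoch_inf_unit_interval : 0 <= qpoch_inf b q <= 1.
Proof.
  split.
  - apply (is_lim_seq_le (fun _ => 0) (qpoch_part b q) 0 (qpoch_inf b q));
      [intro n; apply qpoch_part_decr | apply is_lim_seq_const | apply qpoch_part_cvg].
  - apply (is_lim_seq_le (qpoch_part b q) (fun _ => 1) (qpoch_inf b q) 1);
      [intro n; apply qpoch_part_decr | apply qpoch_part_cvg | apply is_lim_seq_const].
Qed.

Lemma qpoch_inf_lower : 1 - b / (1 - q) <= qpoch_inf b q.
Proof.
  apply (is_lim_seq_le (fun _ => 1 - b / (1 - q)) (qpoch_part b q) (1 - b / (1 - q)) (qpoch_inf b q));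
    [apply qpoch_part_lower | apply is_lim_seq_const | apply qpoch_part_cvg].
Qed.

End qPochhammer.

Lemma qpoch_inf_succ b q : 0 < q < 1 -> 0 <= b <= 1 ->
  qpoch_inf b q = (1 - b) * qpoch_inf (b * q) q.
Proof.
  intros Hq Hb.
  assert (Hcvg : is_lim_seq (fun n => qpoch_part b q (S n)) ((1 - b) * qpoch_inf (b * q) q)).
  { apply (is_lim_seq_ext (fun n => (1 - b) * qpoch_part (b * q) q n));
      [intro n; symmetry; apply qpoch_part_shift|].
    apply (is_lim_seq_scal_l _ (1 - b) (qpoch_inf (b * q) q)), qpoch_part_cvg; nra. }
  apply is_lim_seq_incr_1 in Hcvg.
  pose proof (is_lim_seq_unique _ _ Hcvg) as E1.
  rewrite (is_lim_seq_unique _ _ (qpoch_part_cvg b q Hq Hb)) in E1.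
  injection E1; auto.
Qed.

Lemma qpoch_inf_pos b q : 0 < q < 1 -> 0 <= b < 1 -> 0 < qpoch_inf b q.
Proof.
  intros Hq Hb.
  assert (Hstep : forall m b', 0 <= b' < 1 -> b' * q ^ m < 1 - q -> 0 < qpoch_inf b' q).
  { induction m as [|m IH]; intros b' Hb' Hsmall.
    - pose proof (qpoch_inf_lower b' q Hq ltac:(lra)).
      assert (b' / (1 - q) < 1) by (apply Rlt_div_l; simpl in Hsmall; lra).
      lra.
    - rewrite qpoch_inf_succ by lra.
      apply Rmult_lt_0_compat; [lra|].
      apply IH; [split; nra|].
      replace (b' * q * q ^ m) with (b' * q ^ S m) by (simpl; ring); exact Hsmall. }
  destruct (pow_lt_1_zero q ltac:(rewrite Rabs_pos_eq; lra) (1 - q) ltac:(lra)) as [m Hm].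
  specialize (Hm m (le_n m)); rewrite Rabs_pos_eq in Hm by (apply pow_le; lra).
  apply (Hstep m b Hb).
  pose proof (pow_le q m ltac:(lra)); nra.
Qed.

(** * Sequences on the q-lattice *)

Lemma is_lim_seq_geom_bound (u : nat -> R) C r : 0 <= r < 1 ->
  (forall N, Rabs (u N) <= C * r ^ N) -> is_lim_seq u 0.
Proof.
  intros Hr Hu; apply is_lim_seq_abs_0.
  assert (Hgeom : is_lim_seq (fun N => C * r ^ N) 0).
  { replace (Finite 0) with (Rbar_mult C 0) by (simpl; f_equal; ring).
    apply is_lim_seq_scal_l, is_lim_seq_geom; rewrite Rabs_pos_eq; lra. }
  apply (is_lim_seq_le_le (fun _ => 0) _ (fun N => C * r ^ N)); auto using is_lim_seq_const.
  intro N; split; [apply Rabs_pos | apply Hu].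
Qed.

Definition qnode (q b : R) (j : nat) : R := q ^ j * b.

Lemma qnode_pos q b j : 0 < q -> 0 < b -> 0 < qnode q b j.
Proof. intros Hq Hb; apply Rmult_lt_0_compat; [apply pow_lt|]; lra. Qed.

Lemma qnode_bounded q b j : 0 < q < 1 -> 0 < b -> Rabs (qnode q b j) <= b.
Proof.
  intros Hq Hb; rewrite Rabs_pos_eq by (apply Rlt_le, qnode_pos; lra); unfold qnode.
  pose proof (pow_unit_interval q j ltac:(lra)); nra.
Qed.

Lemma poly_eval_nonzero_on_qnodes q b c n : 0 < q < 1 -> 0 < b -> c n <> 0 ->
  ~ (forall j, poly_eval c n (qnode q b j) = 0).
Proof.
  intros Hq Hb; revert c; induction n as [|n IH]; intros c Hc Hall.
  - apply Hc; rewrite <- (Hall 0%nat); unfold poly_eval; simpl; ring.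
  - set (c' := fun k => c (S k)).
    assert (Hc0 : c 0%nat = 0).
    { set (M := poly_eval (fun k => Rabs (c' k)) n b).
      assert (Hcvg : is_lim_seq (fun _ => c 0%nat) 0).
      { apply (is_lim_seq_geom_bound _ (b * M) q); [lra|]; intro j.
        assert (E : c 0%nat = - qnode q b j * poly_eval c' n (qnode q b j))
          by (specialize (Hall j); rewrite poly_eval_succ_horner in Hall; fold c' in Hall; lra).
        assert (Hpoly : Rabs (poly_eval c' n (qnode q b j)) <= M)
          by (apply poly_eval_abs_le, qnode_bounded; assumption).
        pose proof (qnode_pos q b j ltac:(lra) Hb).
        rewrite E, Rabs_mult, Rabs_Ropp, Rabs_pos_eq by lra.
        pose proof (Rabs_pos (poly_eval c' n (qnode q b j))); unfold qnode in *; nra. }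
      pose proof (is_lim_seq_unique _ _ Hcvg) as E.
      rewrite Lim_seq_const in E; injection E; auto. }
    apply (IH c' Hc); intro j.
    specialize (Hall j); rewrite poly_eval_succ_horner, Hc0, Rplus_0_l in Hall; fold c' in Hall.
    apply Rmult_integral in Hall; destruct Hall as [H|H]; [|exact H].
    pose proof (qnode_pos q b j ltac:(lra) Hb); lra.
Qed.

Definition bounded_seq (u : nat -> R) : Prop := exists M, forall j, Rabs (u j) <= M.

Lemma bounded_seq_mult u v : bounded_seq u -> bounded_seq v -> bounded_seq (fun j => u j * v j).
Proof.
  intros [Mu Hu] [Mv Hv]; exists (Mu * Mv); intro j; rewrite Rabs_mult.
  apply Rmult_le_compat; auto using Rabs_pos.
Qed.

Lemma bounded_seq_minus u v : bounded_seq u -> bounded_seq v -> bounded_seq (fun j => u j - v j).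
Proof.
  intros [Mu Hu] [Mv Hv]; exists (Mu + Mv); intro j.
  eapply Rle_trans; [apply Rabs_triang|]; rewrite Rabs_Ropp; apply Rplus_le_compat; auto.
Qed.

Section GeometricWeight.

Variables (w : nat -> R) (r : R).
Hypotheses (r_range : 0 <= r < 1) (w_range : forall j, 0 <= w j <= r ^ j).

Lemma weighted_bounded_cvg_0 u : bounded_seq u -> is_lim_seq (fun j => w j * u j) 0.
Proof.
  intros [M HM]; apply (is_lim_seq_geom_bound _ M r r_range); intro j.
  rewrite Rabs_mult, Rabs_pos_eq by apply w_range.
  pose proof (w_range j); pose proof (HM j); pose proof (Rabs_pos (u j)).
  rewrite Rmult_comm; apply Rmult_le_compat; lra.
Qed.

Lemma weighted_bounded_ex_series u : bounded_seq u -> ex_series (fun j => w j * u j).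
Proof.
  intros [M HM].
  apply (@ex_series_le R_AbsRing R_CompleteNormedModule _ (fun j => M * r ^ j)).
  - intro j; change (norm (w j * u j)) with (Rabs (w j * u j)).
    rewrite Rabs_mult, Rabs_pos_eq by apply w_range.
    pose proof (w_range j); pose proof (HM j); pose proof (Rabs_pos (u j)).
    rewrite Rmult_comm; apply Rmult_le_compat; lra.
  - apply (@ex_series_scal R_AbsRing R_NormedModule M (fun j => r ^ j)).
    apply ex_series_geom; rewrite Rabs_pos_eq; lra.
Qed.

End GeometricWeight.

(** * Discrete self-adjoint problems *)

Section DiscreteSturmLiouville.

Variables (w e : nat -> R) (al : R).

(* [f] and [h] stand for a function and its q-derivative sampled on the nodes;
   the second clause is the discrete self-adjoint form of the equation. *)
Definition node_eigen (lam : R) (f h : nat -> R) : Prop :=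
  lam * w 0%nat * f 0%nat = - al * w 0%nat * h 0%nat /\
  (forall j, lam * w (S j) * f (S j) = al * (w j * h j - w (S j) * h (S j))) /\
  (forall j, f (S j) = f j - e j * h j).

Lemma green_identity lf lg f g h k : node_eigen lf f h -> node_eigen lg g k ->
  forall N, (lf - lg) * sum_f_R0 (fun j => w j * (f j * g j)) N
            = - al * w N * (h N * g N - k N * f N).
Proof.
  intros [Hf0 [HfS Df]] [Hg0 [HgS Dg]] N; induction N as [|N IH].
  - simpl; transitivity ((lf * w 0%nat * f 0%nat) * g 0%nat - (lg * w 0%nat * g 0%nat) * f 0%nat);
      [ring | rewrite Hf0, Hg0; ring].
  - rewrite tech5, Rmult_plus_distr_l, IH.
    transitivity (- al * w N * (h N * g N - k N * f N)
                  + (lf * w (S N) * f (S N)) * g (S N) - (lg * w (S N) * g (S N)) * f (S N));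
      [ring|].
    rewrite HfS, HgS, (Df N), (Dg N); ring.
Qed.

Lemma node_eigen_orthogonal r lf lg f g h k :
  0 <= r < 1 -> (forall j, 0 <= w j <= r ^ j) ->
  bounded_seq f -> bounded_seq g -> bounded_seq h -> bounded_seq k ->
  node_eigen lf f h -> node_eigen lg g k -> lf <> lg ->
  is_series (fun j => w j * (f j * g j)) 0.
Proof.
  intros Hr Hw Bf Bg Bh Bk Ef Eg Hne.
  assert (Hex : ex_series (fun j => w j * (f j * g j)))
    by (apply (weighted_bounded_ex_series w r Hr Hw), bounded_seq_mult; auto).
  destruct Hex as [S HS].
  assert (Hsum : is_lim_seq (fun N => (lf - lg) * sum_f_R0 (fun j => w j * (f j * g j)) N)
                            ((lf - lg) * S)).
  { apply (is_lim_seq_scal_l _ (lf - lg) S).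
    apply (is_lim_seq_ext (sum_n (fun j => w j * (f j * g j)))); [intro; apply sum_n_Reals|].
    exact HS. }
  assert (Hbdry : is_lim_seq (fun N => (lf - lg) * sum_f_R0 (fun j => w j * (f j * g j)) N) 0).
  { apply (is_lim_seq_ext (fun N => - al * (w N * (h N * g N - k N * f N)))).
    { intro N; rewrite (green_identity lf lg f g h k Ef Eg N); ring. }
    replace (Finite 0) with (Rbar_mult (- al) 0) by (simpl; f_equal; ring).
    apply is_lim_seq_scal_l, (weighted_bounded_cvg_0 w r Hr Hw).
    apply bounded_seq_minus; apply bounded_seq_mult; auto. }
  apply is_lim_seq_unique in Hsum; apply is_lim_seq_unique in Hbdry.
  rewrite Hsum in Hbdry; injection Hbdry as Hzero.
  destruct (Rmult_integral _ _ Hzero) as [H|H]; [exfalso; apply Hne; lra | rewrite <- H; exact HS].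
Qed.

End DiscreteSturmLiouville.

Lemma is_series_term_le (a : nat -> R) S : (forall j, 0 <= a j) -> is_series a S ->
  forall j, a j <= S.
Proof.
  intros Ha HS j.
  apply Rle_trans with (sum_f_R0 a j).
  - destruct j as [|j]; [simpl; lra|].
    rewrite tech5; pose proof (cond_pos_sum a j Ha); lra.
  - apply sum_incr; [apply is_series_Reals, HS | exact Ha].
Qed.

(* [qweight q r j] is [q^j rho(q^j b)] divided by the constant [|b|^alpha], since [q^alpha = r/q]. *)
Definition qweight (q r : R) (j : nat) : R := r ^ j * qpoch_inf (q ^ S j) q.

Lemma poly_eval_bounded_on_qnodes q b c n : 0 < q < 1 -> 0 < b ->
  bounded_seq (fun j => poly_eval c n (qnode q b j)).
Proof.
  intros Hq Hb; exists (poly_eval (fun k => Rabs (c k)) n b); intro j.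
  apply poly_eval_abs_le, qnode_bounded; assumption.
Qed.

Lemma Dq_poly_eval_bounded_on_qnodes q b c n : 0 < q < 1 -> 0 < b ->
  bounded_seq (fun j => Dq q (poly_eval c n) (qnode q b j)).
Proof.
  intros Hq Hb; destruct n as [|n].
  - exists 0; intro j.
    rewrite Dq_nonzero by (apply Rgt_not_eq, qnode_pos; lra).
    unfold poly_eval; simpl; unfold Rdiv.
    rewrite Rminus_diag, Rmult_0_l, Rabs_R0; lra.
  - destruct (poly_eval_bounded_on_qnodes q b
                (fun k => c (S k) * ((1 - q ^ S k) / (1 - q))) n Hq Hb) as [M HM].
    exists M; intro j.
    rewrite Dq_poly_eval_succ by (lra || apply Rgt_not_eq, qnode_pos; lra).
    apply HM.
Qed.

Lemma qweight_pos q r j : 0 < q < 1 -> 0 < r -> 0 < qweight q r j.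
Proof.
  intros Hq Hr; apply Rmult_lt_0_compat; [apply pow_lt; lra|].
  apply qpoch_inf_pos; [lra|]; split; [apply pow_le; lra | apply pow_lt_1_compat; [lra | lia]].
Qed.

Lemma qweight_le q r j : 0 < q < 1 -> 0 < r -> qweight q r j <= r ^ j.
Proof.
  intros Hq Hr; unfold qweight.
  pose proof (pow_lt r j Hr).
  pose proof (qpoch_inf_unit_interval (q ^ S j) q Hq (pow_unit_interval q (S j) ltac:(lra))).
  nra.
Qed.

Lemma qweight_succ q r j : 0 < q < 1 ->
  qweight q r (S j) * (1 - q ^ S j) = r * qweight q r j.
Proof.
  intro Hq; unfold qweight.
  rewrite (qpoch_inf_succ (q ^ S j) q Hq (pow_unit_interval q (S j) ltac:(lra))).
  replace (q ^ S j * q) with (q ^ S (S j)) by (simpl; ring); simpl; ring.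
Qed.

Section qEHTOnNodes.

Variables q s2 a1 t1 t0 r : R.
Hypotheses (q_range : 0 < q < 1) (a1_pos : 0 < a1)
  (tau_slope : t1 = / 2 * s2 * q / (1 - q)) (tau_at_a1 : t1 * a1 * r = t1 * a1 + t0).

Let sigma1 (x : R) : R := / 2 * s2 * x * (x - a1).
Let tau (x : R) : R := t1 * x + t0.

Lemma qEHT_node_relation lam y x : qEHT q sigma1 tau lam y -> x <> 0 ->
  lam * y x = t1 * (a1 - x) * Dq q y (/ q * x) - t1 * a1 * r * Dq q y x.
Proof.
  intros Hy Hx; specialize (Hy x); rewrite Dq_nonzero in Hy by exact Hx.
  unfold sigma1, tau in Hy.
  assert (Ht0 : t0 = t1 * a1 * (r - 1)) by lra.
  assert (1 - / q <> 0) by (apply inv_neq_1; lra).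
  replace (lam * y x) with (- (/ 2 * s2 * x * (x - a1)
      * ((Dq q y x - Dq q y (/ q * x)) / ((1 - / q) * x)) + (t1 * x + t0) * Dq q y x)) by lra.
  rewrite Ht0, tau_slope; field; repeat split; auto; lra.
Qed.

Lemma qEHT_node_eigen lam y : qEHT q sigma1 tau lam y ->
  node_eigen (qweight q r) (fun j => (1 - q) * qnode q a1 j) (t1 * a1 * r) lam
    (fun j => y (qnode q a1 j)) (fun j => Dq q y (qnode q a1 j)).
Proof.
  intro Hy.
  assert (Hnz : forall j, qnode q a1 j <> 0) by (intro j; apply Rgt_not_eq, qnode_pos; lra).
  assert (Hprev : forall j, / q * qnode q a1 (S j) = qnode q a1 j)
    by (intro j; unfold qnode; simpl; field; lra).
  split; [|split].
  - pose proof (qEHT_node_relation lam y _ Hy (Hnz 0%nat)) as E.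
    replace (a1 - qnode q a1 0) with 0 in E by (unfold qnode; simpl; ring).
    transitivity (qweight q r 0 * (lam * y (qnode q a1 0))); [ring | rewrite E; ring].
  - intro j; pose proof (qEHT_node_relation lam y _ Hy (Hnz (S j))) as E.
    rewrite Hprev in E.
    transitivity (qweight q r (S j) * (lam * y (qnode q a1 (S j)))); [ring | rewrite E].
    transitivity (t1 * a1 * Dq q y (qnode q a1 j) * (qweight q r (S j) * (1 - q ^ S j))
                  - t1 * a1 * r * (qweight q r (S j) * Dq q y (qnode q a1 (S j))));
      [unfold qnode; ring | rewrite qweight_succ by exact q_range; ring].
  - intro j; rewrite Dq_nonzero by apply Hnz.
    replace (q * qnode q a1 j) with (qnode q a1 (S j)) by (unfold qnode; simpl; ring).
    field; split; [apply Hnz | lra].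
Qed.

End qEHTOnNodes.

Section qEHTOrthogonality.

Variables q s2 a1 t1 t0 r : R.
Hypotheses (q_range : 0 < q < 1) (s2_neq0 : s2 <> 0) (a1_pos : 0 < a1) (r_range : 0 < r < 1)
  (tau_slope : t1 = / 2 * s2 * q / (1 - q)) (tau_at_a1 : t1 * a1 * r = t1 * a1 + t0).

Let P := qEHT_poly q s2 a1 t1 t0.
Let gram (n m : nat) (j : nat) : R := qweight q r j * (P n (qnode q a1 j) * P m (qnode q a1 j)).

Let weight_range j : 0 <= qweight q r j <= r ^ j.
Proof. split; [apply Rlt_le, qweight_pos | apply qweight_le]; lra. Qed.

Let P_node_eigen n :
  node_eigen (qweight q r) (fun j => (1 - q) * qnode q a1 j) (t1 * a1 * r) (lambda_n q s2 t1 n)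
    (fun j => P n (qnode q a1 j)) (fun j => Dq q (P n) (qnode q a1 j)).
Proof.
  apply (qEHT_node_eigen q s2 a1 t1 t0 r); try assumption.
  apply qEHT_poly_solves; [exact q_range|]; intros k Hk; apply lambda_n_neq; auto; lia.
Qed.

Lemma qEHT_poly_gram_ex_series n m : ex_series (gram n m).
Proof.
  apply (weighted_bounded_ex_series _ r ltac:(lra) weight_range), bounded_seq_mult;
    apply poly_eval_bounded_on_qnodes; assumption.
Qed.

Lemma qEHT_poly_gram_orthogonal n m : n <> m -> is_series (gram n m) 0.
Proof.
  intro Hnm.
  apply (node_eigen_orthogonal (qweight q r) (fun j => (1 - q) * qnode q a1 j) (t1 * a1 * r) r
           (lambda_n q s2 t1 n) (lambda_n q s2 t1 m)
           (fun j => P n (qnode q a1 j)) (fun j => P m (qnode q a1 j))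
           (fun j => Dq q (P n) (qnode q a1 j)) (fun j => Dq q (P m) (qnode q a1 j)));
    unfold P, qEHT_poly;
    auto using P_node_eigen, lambda_n_neq, poly_eval_bounded_on_qnodes,
      Dq_poly_eval_bounded_on_qnodes; lra.
Qed.

Lemma qEHT_poly_gram_norm_pos n : 0 < Series (gram n n).
Proof.
  apply Rnot_le_lt; intro Hle.
  apply (poly_eval_nonzero_on_qnodes q a1
           (eigen_coef (lambda_n q s2 t1) (qEHT_mu q s2 a1 t0) n) n q_range a1_pos);
    [rewrite eigen_coef_top; lra|].
  intro j.
  assert (Hterm : gram n n j <= 0).
  { eapply Rle_trans; [|exact Hle].
    apply is_series_term_le; [|apply Series_correct, qEHT_poly_gram_ex_series].
    intro i; apply Rmult_le_pos; [apply weight_range | apply Rle_0_sqr]. }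
  pose proof (qweight_pos q r j q_range ltac:(lra)).
  change (poly_eval _ n (qnode q a1 j)) with (P n (qnode q a1 j)).
  assert (Hsq : P n (qnode q a1 j) * P n (qnode q a1 j) <= 0) by (unfold gram in Hterm; nra).
  apply Rsqr_0_uniq, Rle_antisym; [exact Hsq | apply Rle_0_sqr].
Qed.

Theorem qEHT_poly_orthogonality : exists N : nat -> R,
  (forall n, 0 < N n) /\ forall m n, is_series (gram n m) (if Nat.eqb m n then N n else 0).
Proof.
  exists (fun n => Series (gram n n)); split; [exact qEHT_poly_gram_norm_pos|].
  intros m n; destruct (Nat.eqb_spec m n) as [->|Hmn].
  - apply Series_correct, qEHT_poly_gram_ex_series.
  - apply qEHT_poly_gram_orthogonal; auto.
Qed.

End qEHTOrthogonality.

(** * The Jackson integral *)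

Lemma cexp_plus z w : cexp (z + w)%C = (cexp z * cexp w)%C.
Proof.
  destruct z as [a b], w as [c d]; unfold cexp, Cplus, Cmult; simpl.
  rewrite exp_plus, cos_plus, sin_plus; f_equal; ring.
Qed.

Lemma cexp_neq_0 z : cexp z <> RtoC 0.
Proof.
  destruct z as [a b]; unfold cexp, RtoC; simpl; intro E; injection E as E1 E2.
  pose proof (exp_pos a); pose proof (sin2_cos2 b); unfold Rsqr in *.
  apply Rmult_integral in E1; apply Rmult_integral in E2.
  destruct E1, E2; nra.
Qed.

Lemma RtoC_neq_0 x : x <> 0 -> RtoC x <> RtoC 0.
Proof. intros Hx E; apply Hx; exact (f_equal fst E). Qed.

Lemma cpow_abs_qnode q b Y alpha j : 0 < q -> 0 < b ->
  cexp (alpha * RtoC (ln q))%C = RtoC Y ->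
  cpow_abs (qnode q b j) alpha = (cpow_abs b alpha * RtoC (Y ^ j))%C.
Proof.
  intros Hq Hb HY; unfold cpow_abs.
  rewrite Rabs_pos_eq by (apply Rlt_le, qnode_pos; assumption).
  rewrite (Rabs_pos_eq b) by lra.
  induction j as [|j IH].
  - unfold qnode; simpl; rewrite Rmult_1_l; ring.
  - replace (qnode q b (S j)) with (q * qnode q b j) by (unfold qnode; simpl; ring).
    rewrite ln_mult, RtoC_plus, Cmult_plus_distr_l, cexp_plus, HY, IH
      by (try apply qnode_pos; assumption).
    simpl pow; rewrite RtoC_mult; ring.
Qed.

Lemma is_series_RtoC (a : nat -> R) S :
  is_series a S -> is_series (V := C_NormedModule) (fun j => RtoC (a j)) (RtoC S).
Proof.
  intro HS; unfold is_series in *.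
  apply (filterlim_ext (fun N => RtoC (sum_n a N))).
  { intro N; induction N as [|N IH]; [rewrite !sum_O; reflexivity|].
    rewrite !sum_Sn, <- IH; unfold plus; simpl; rewrite RtoC_plus; reflexivity. }
  eapply filterlim_comp; [exact HS|].
  apply filterlim_locally; intro eps.
  apply (filter_imp (fun x => ball S eps x)); [|apply locally_ball].
  intros x Hx; split; [exact Hx | apply ball_center].
Qed.

Lemma qint_is_qnode_series q b Y alpha (F : R -> R) l : 0 < q < 1 -> 0 < b ->
  cexp (alpha * RtoC (ln q))%C = RtoC Y ->
  is_series (fun j => qweight q (q * Y) j * F (qnode q b j)) l ->
  qint_is q b (fun x => (RtoC (F x) * (cpow_abs x alpha * RtoC (qpoch_inf (q * x / b) q)))%C)
    (RtoC ((1 - q) * b) * (cpow_abs b alpha * RtoC l))%C.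
Proof.
  intros Hq Hb HY HS; exists (cpow_abs b alpha * RtoC l)%C; split; [|reflexivity].
  apply (is_series_ext (fun j => scal (cpow_abs b alpha)
                                   (RtoC (qweight q (q * Y) j * F (qnode q b j))))).
  - intro j; fold (qnode q b j); rewrite (cpow_abs_qnode q b Y) by (assumption || lra).
    replace (q * qnode q b j / b) with (q ^ S j) by (unfold qnode; simpl; field; lra).
    unfold qweight; change (scal (cpow_abs b alpha) ?x) with (cpow_abs b alpha * x)%C.
    rewrite Rpow_mult_distr, !RtoC_mult.
    match goal with |- ?u = ?v => change (@eq C u v) end; ring.
  - apply (is_series_scal (V := C_NormedModule)), is_series_RtoC, HS.
Qed.

Lemma tau_slope_of_ratio q s2 t1 : 0 < q < 1 -> s2 <> 0 ->
  t1 / (/ 2 * s2) = - / (1 - / q) -> t1 = / 2 * s2 * q / (1 - q).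
Proof.
  intros Hq Hs E.
  assert (1 - / q <> 0) by (apply inv_neq_1; lra).
  replace t1 with (t1 / (/ 2 * s2) * (/ 2 * s2)) by (field; exact Hs).
  rewrite E; field; repeat split; auto; lra.
Qed.

Theorem theorem5p18 (q s2 a1 t1 t0 : R) (alpha : C) :
  0 < q < 1 ->
  s2 <> 0 -> 0 < a1 -> t1 <> 0 ->
  t1 / (/ 2 * s2) = - / (1 - / q) ->
  q * ((1 - / q) * t0 - / 2 * s2 * a1) <> 0 ->
  0 < q * (/ q * (1 - (1 - / q) / a1 * (t0 / (/ 2 * s2)))) < 1 ->
  cexp (alpha * RtoC (ln q))%C =
    RtoC (- (/ q ^ 2 * (q * ((1 - / q) * t0 - / 2 * s2 * a1))) / (/ 2 * s2 * a1)) ->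
  exists (P : nat -> R -> R) (d : nat -> C),
    (forall n : nat,
       is_poly_deg (P n) n /\
       qEHT q (fun x => / 2 * s2 * x * (x - a1)) (fun x => t1 * x + t0)
            (lambda_n q s2 t1 n) (P n) /\
       d n <> RtoC 0) /\
    (forall m n : nat,
       qint_is q a1
         (fun x => (RtoC (P n x * P m x) *
                   (cpow_abs x alpha * RtoC (qpoch_inf (q * x / a1) q)))%C)
         (if Nat.eqb m n then d n else RtoC 0)).
Proof.
  (* [t1 <> 0] and [sigma_2'(0) <> 0] follow from the other hypotheses. *)
  intros Hq Hs2 Ha1 _ Hratio _ Hy0 Halpha.
  pose proof (tau_slope_of_ratio q s2 t1 Hq Hs2 Hratio) as Ht1.
  set (Y := - (/ q ^ 2 * (q * ((1 - / q) * t0 - / 2 * s2 * a1))) / (/ 2 * s2 * a1)) in Halpha.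
  assert (1 - / q <> 0) by (apply inv_neq_1; lra).
  assert (Hr : 0 < q * Y < 1).
  { replace (q * Y) with (q * (/ q * (1 - (1 - / q) / a1 * (t0 / (/ 2 * s2))))); [exact Hy0|].
    unfold Y; field; repeat split; auto; lra. }
  assert (Hrel : t1 * a1 * (q * Y) = t1 * a1 + t0)
    by (unfold Y; rewrite Ht1; field; repeat split; auto; lra).
  destruct (qEHT_poly_orthogonality q s2 a1 t1 t0 (q * Y) Hq Hs2 Ha1 Hr Ht1 Hrel)
    as [N [HN Horth]].
  set (P := qEHT_poly q s2 a1 t1 t0).
  exists P, (fun n => RtoC ((1 - q) * a1) * (cpow_abs a1 alpha * RtoC (N n)))%C; split.
  - intro n; split; [apply qEHT_poly_deg | split].
    + apply qEHT_poly_solves; [exact Hq|].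
      intros k Hk; apply lambda_n_neq; auto; lia.
    + apply Cmult_neq_0; [|apply Cmult_neq_0; [apply cexp_neq_0|]]; apply RtoC_neq_0;
        [apply Rmult_integral_contrapositive; split | specialize (HN n)]; lra.
  - intros m n.
    pose proof (qint_is_qnode_series q a1 Y alpha (fun x => P n x * P m x) _ Hq Ha1 Halpha
                  (Horth m n)) as Hint.
    destruct (Nat.eqb m n); [exact Hint|].
    rewrite Cmult_0_r, Cmult_0_r in Hint; exact Hint.
Qed.
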